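(* Let $V$ be a finite-dimensional real vector space with a Lorentzian inner product $g$, and let $V=E_1\oplus\cdots\oplus E_r$ ($r\ge1$) be a $g$-orthogonal direct sum of subspaces on each of which $g$ is non-degenerate, with $E_r$ Lorentzian. For $1\le\beta\le r$ let $g_\beta(X,Y)=g(X_\beta,Y_\beta)$, where $X_\beta,Y_\beta$ are the $E_\beta$-components. Let $p\in E_r$ be a non-zero light-like vector and $\theta=g(p,\cdot)$. Let $\bar g_1=g,\bar g_2,\dots,\bar g_{r+1}$ be linearly independent symmetric bilinear forms on $V$ with $$\bar g_\alpha=\sum_{\beta=1}^r C_{\beta\alpha}g_\beta+C_{r+1\,\alpha}\,\theta\otimes\theta,$$ and assume $C_{r\alpha}=0$ and $C_{r+1\,\alpha}\neq0$ for all $2\le\alpha\le r+1$. Let $W=\bigcap_{\alpha=2}^{r+1}\ker\bar g_\alpha$ and let $W^{\perp_g}$ be its $g$-orthogonal complement. Then $$\{X\in V\mid \bar g_\alpha(X,Y)=0\text{ for all }2\le\alpha\le r+1\text{ and all }Y\in W^{\perp_g}\}=E_r.$$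
   Context: For a symmetric bilinear form $b$ on $V$, $\ker b=\{X\in V\mid b(X,Y)=0\ \forall Y\in V\}$. *)

From HB Require Import structures.
From mathcomp Require Import all_boot all_order all_algebra.
From mathcomp Require Import reals.
Set Implicit Arguments. Unset Strict Implicit. Unset Printing Implicit Defensive.
Import Order.TTheory GRing.Theory Num.Theory.
Local Open Scope ring_scope.

Section Forms.
Variables (R : realType) (V : vectType R).

Definition bilinear_form (b : V -> V -> R) : Prop :=
  (forall a x y z, b (a *: x + y) z = a * b x z + b y z) /\
  (forall a x y z, b z (a *: x + y) = a * b z x + b z y).

Definition symmetric_form (b : V -> V -> R) : Prop := forall x y, b x y = b y x.

Definition sym_bilinear_form (b : V -> V -> R) : Prop :=
  bilinear_form b /\ symmetric_form b.

Definition form_ker (b : V -> V -> R) : V -> Prop :=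
  fun X => forall Y, b X Y = 0.

Definition nondeg_on (b : V -> V -> R) (U : {vspace V}) : Prop :=
  forall x, x \in U -> (forall y, y \in U -> b x y = 0) -> x = 0.

Definition neg_def_on (b : V -> V -> R) (S : {vspace V}) : Prop :=
  forall x, x \in S -> x != 0 -> b x x < 0.

(* b restricted to U is Lorentzian: non-degenerate of index 1, i.e. the
   maximal dimension of a subspace of U on which b is negative definite is 1
   (signature convention (-,+,...,+)). *)
Definition lorentzian_on (b : V -> V -> R) (U : {vspace V}) : Prop :=
  [/\ nondeg_on b U,
      exists2 u, u \in U & b u u < 0 &
      forall S : {vspace V}, (S <= U)%VS -> neg_def_on b S -> (\dim S <= 1)%N].

Definition lorentzian (b : V -> V -> R) : Prop :=
  sym_bilinear_form b /\ lorentzian_on b fullv.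

Definition orth_subspaces (b : V -> V -> R) (U1 U2 : {vspace V}) : Prop :=
  forall x y, x \in U1 -> y \in U2 -> b x y = 0.

Definition component (n : nat) (E : 'I_n -> {vspace V}) (i : 'I_n) (X : V) : V :=
  sumv_pi (\sum_(j < n) E j)%VS i X.

Definition partial_form (b : V -> V -> R) (n : nat) (E : 'I_n -> {vspace V})
  (i : 'I_n) : V -> V -> R :=
  fun X Y => b (component E i X) (component E i Y).

Definition forms_lin_indep (m : nat) (bs : 'I_m -> V -> V -> R) : Prop :=
  forall c : 'I_m -> R, (forall X Y, \sum_(a < m) c a * bs a X Y = 0) ->
    forall a, c a = 0.

Definition orth_compl (b : V -> V -> R) (W : V -> Prop) : V -> Prop :=
  fun Y => forall X, W X -> b X Y = 0.

End Forms.

From HB Require Import structures.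
From mathcomp Require Import all_boot all_order all_algebra.
From mathcomp Require Import reals.
Set Implicit Arguments. Unset Strict Implicit. Unset Printing Implicit Defensive.
Import Order.TTheory GRing.Theory Num.Theory.
Local Open Scope ring_scope.

(* On [E_j], [j <> r], the forms [bar g_alpha] (alpha >= 2) reduce to the
   multiples [C_(j,alpha) g], and linear independence of the [bar g_alpha]
   forces some [C_(j,alpha)] to be nonzero; by non-degeneracy of [g] on [E_j],
   every element of [W] has zero [E_j]-component.  Hence each [E_j], [j <> r],
   lies in [W^perp], and testing [bar g_alpha(X, .)] on it kills [X_j].
   Conversely [bar g_alpha = C_(r+1,alpha) theta (x) theta] on [E_r] and [p] is
   null, so [p] lies in [W], [theta] vanishes on [W^perp], and so does
   [bar g_alpha(X, .)] for [X] in [E_r]. *)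

Section BilinearForm.
Variables (R : realType) (V : vectType R) (b : V -> V -> R).
Hypothesis bilin_b : bilinear_form b.

Lemma form0l z : b 0 z = 0.
Proof.
case: bilin_b => bD _; have := bD 1 0 0 z; rewrite scale1r addr0 mul1r.
by move=> b0; apply: (addrI (b 0 z)); rewrite addr0 -b0.
Qed.

Lemma form0r z : b z 0 = 0.
Proof.
case: bilin_b => _ bD; have := bD 1 0 0 z; rewrite scale1r addr0 mul1r.
by move=> b0; apply: (addrI (b z 0)); rewrite addr0 -b0.
Qed.

Lemma form_suml (I : finType) (F : I -> V) z :
  b (\sum_i F i) z = \sum_i b (F i) z.
Proof.
have bD : {morph b^~ z : x y / x + y}.
  by move=> x y; case: bilin_b => bD _; rewrite -{1}[x]scale1r bD mul1r.
exact: (big_morph _ bD (form0l z)).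
Qed.

End BilinearForm.

Lemma forms_lin_indep_coef (R : realType) (V : vectType R) (m n : nat)
    (bs : 'I_m -> V -> V -> R) (hs : 'I_n -> V -> V -> R) (D : 'M[R]_(n, m)) :
  forms_lin_indep bs ->
  (forall a X Y, bs a X Y = \sum_(b < n) D b a * hs b X Y) ->
  forall c : 'I_m -> R, (forall b, \sum_(a < m) c a * D b a = 0) ->
  forall a, c a = 0.
Proof.
move=> indep bsE c cD; apply: indep => X Y.
under eq_bigr do rewrite bsE mulr_sumr.
rewrite exchange_big big1 // => b _.
by under eq_bigr do rewrite mulrA; rewrite -mulr_suml cD mul0r.
Qed.

Lemma exists_nonzero_kernel (F : fieldType) (m n : nat) (B : 'M[F]_(m, n)) :
  (n < m)%N -> exists2 v : 'rV_m, v != 0 & v *m B = 0.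
Proof.
move=> lt_nm; have : kermx B != 0.
  rewrite -mxrank_eq0 mxrank_ker subn_eq0 -ltnNge.
  exact: leq_ltn_trans (rank_leq_col B) lt_nm.
by case/rowV0Pn => v /sub_kermxP vB v0; exists v.
Qed.

Section Components.
Variables (R : realType) (V : vectType R) (n : nat) (E : 'I_n -> {vspace V}).
Hypotheses (dirE : directv (\sum_(j < n) E j))
           (fullE : (\sum_(j < n) E j)%VS = fullv).

Lemma component_mem i x : component E i x \in E i.
Proof. exact: memv_sum_pi. Qed.

Lemma sum_component x : \sum_i component E i x = x.
Proof. by apply: sumv_pi_sum; rewrite fullE memvf. Qed.

Lemma component_id i j x :
  x \in E j -> component E i x = if i == j then x else 0.
Proof.
move=> xEj; have /directv_sum_unique uniqE := dirE.
have := uniqE (component E^~ x) (fun l => if l == j then x else 0).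
rewrite sum_component (bigD1 j) //= eqxx big1 ?addr0; last by move=> l /negbTE->.
move=> /(_ (fun l _ => component_mem l x)) eq_comp.
have /forall_inP/(_ i isT)/eqP // : [forall (l | true),
    component E l x == if l == j then x else 0].
by rewrite -eq_comp ?eqxx // => l _; case: eqP => [->|_]; rewrite ?mem0v.
Qed.

Variable g : V -> V -> R.
Hypotheses (bilin_g : bilinear_form g)
           (orthE : forall i j, i != j -> orth_subspaces g (E i) (E j)).

Lemma form_componentl j x y : y \in E j -> g x y = g (component E j x) y.
Proof.
move=> yEj; rewrite -{1}(sum_component x) form_suml // (bigD1 j) //=.
by rewrite big1 ?addr0 // => i ij; exact: orthE ij _ _ (component_mem i x) yEj.
Qed.

Lemma partial_form_memr i j x y : y \in E j ->
  partial_form g E i x y = if i == j then g (component E j x) y else 0.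
Proof.
move=> yEj; rewrite /partial_form (component_id i yEj).
by case: eqP => [->|_]; rewrite ?form0r.
Qed.

Lemma partial_form_meml i j x y : x \in E j ->
  partial_form g E i x y = if i == j then g x (component E j y) else 0.
Proof.
move=> xEj; rewrite /partial_form (component_id i xEj).
by case: eqP => [->|_]; rewrite ?form0l.
Qed.

End Components.

Lemma lift_inord_widen (k : nat) (j : 'I_k.+1) :
  j != ord_max -> lift (inord k) j = widen_ord (leqnSn _) j :> 'I_k.+2.
Proof.
move=> jr; have jk : (j < k)%N.
  rewrite ltn_neqAle -ltnS ltn_ord andbT.
  by apply: contra jr => /eqP jk; apply/eqP/val_inj.
by apply/val_inj; rewrite /= /bump inordK // leqNgt jk.
Qed.

Section DegenerateForms.
Variables (R : realType) (V : vectType R) (k : nat) (g : V -> V -> R)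
  (E : 'I_k.+1 -> {vspace V}) (p : V) (gb : 'I_k.+2 -> V -> V -> R)
  (C : 'M[R]_k.+2).
Hypotheses (bilin_g : bilinear_form g) (dirE : directv (\sum_(j < k.+1) E j))
  (fullE : (\sum_(j < k.+1) E j)%VS = fullv)
  (orthE : forall i j, i != j -> orth_subspaces g (E i) (E j))
  (nondegE : forall i, nondeg_on g (E i))
  (pEr : p \in E ord_max) (null_p : g p p = 0)
  (indep_gb : forms_lin_indep gb)
  (gbE : forall a X Y, gb a X Y =
      \sum_(b < k.+1) C (widen_ord (leqnSn _) b) a * partial_form g E b X Y
      + C ord_max a * (g p X * g p Y))
  (C_r : forall a, a != ord0 -> C (inord k) a = 0).

Let W X := forall a : 'I_k.+2, a != ord0 -> form_ker (gb a) X.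

Lemma gb_memr j a x y : y \in E j -> j != ord_max ->
  gb a x y = C (widen_ord (leqnSn _) j) a * g (component E j x) y.
Proof.
move=> yEj jr; have py0 : g p y = 0 by apply: orthE _ _ pEr yEj; rewrite eq_sym.
rewrite gbE py0 !mulr0 addr0 (bigD1 j) //= big1 ?addr0.
  by rewrite (partial_form_memr dirE fullE bilin_g _ _ yEj) ?eqxx.
move=> b /negbTE bj.
by rewrite (partial_form_memr dirE fullE bilin_g _ _ yEj) bj mulr0.
Qed.

Lemma gb_meml_last a x y : x \in E ord_max -> a != ord0 ->
  gb a x y = C ord_max a * (g p x * g p y).
Proof.
move=> xEr a0; rewrite gbE big1 ?add0r // => b _.
rewrite (partial_form_meml dirE fullE bilin_g _ _ xEr) //.
have [->|_] := eqVneq; last by rewrite mulr0.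
have -> : widen_ord (leqnSn _) ord_max = inord k :> 'I_k.+2.
  by apply/val_inj; rewrite /= inordK.
by rewrite C_r ?mul0r.
Qed.

Lemma gb_combination a X Y : gb a X Y = \sum_(b < k.+2) C b a *
  (if unlift ord_max b is Some i then partial_form g E i X Y
   else g p X * g p Y).
Proof.
rewrite gbE [RHS]big_ord_recr unlift_none; congr (_ + _); apply: eq_bigr => i _.
have -> : widen_ord (leqnSn _) i = lift ord_max i.
  by apply/val_inj; rewrite /= /bump leqNgt ltn_ord.
by rewrite liftK.
Qed.

Lemma coef_row_nonzero j : j != ord_max ->
  exists2 a : 'I_k.+2, a != ord0 & C (widen_ord (leqnSn _) j) a != 0.
Proof.
move=> jr; suff /existsP[a /andP[a0 Ca]] :
    [exists a, (a != ord0) && (C (widen_ord (leqnSn _) j) a != 0)].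
  by exists a.
apply: contraT => /existsPn Cj0.
(* The [k] rows other than [j] and [r], restricted to the [k.+1] columns
   [alpha <> 1], have a nonzero common kernel vector; rows [j] and [r] vanish on
   these columns, so that vector annihilates every row of [C]. *)
pose row_other (i : 'I_k) : 'I_k.+2 := lift (inord k) (lift j i).
have [v v0 vB] := exists_nonzero_kernel
  (\matrix_(a, i) C (row_other i) (lift ord0 a)) (ltnSn k).
pose c a := if unlift ord0 a is Some a' then v 0 a' else 0.
suff c0 : forall a, c a = 0.
  case/negP: v0; apply/eqP/rowP => a.
  by have := c0 (lift ord0 a); rewrite /c liftK mxE.
apply: (forms_lin_indep_coef indep_gb gb_combination) => b.
rewrite big_ord_recl /c unlift_none mul0r add0r.
under eq_bigr do rewrite liftK.
have [b' ->|->] := unliftP (inord k) b; last first.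
  by rewrite big1 // => a _; rewrite C_r ?mulr0 // eq_sym neq_lift.
have [i ->|->] := unliftP j b'.
  have := congr1 (fun M : 'M_(1, k) => M 0 i) vB; rewrite !mxE => vBi.
  by rewrite -[RHS]vBi; apply: eq_bigr => a _; rewrite mxE.
rewrite lift_inord_widen // big1 // => a _.
have := Cj0 (lift ord0 a).
by rewrite negb_and !negbK eq_sym (negbTE (neq_lift _ _)) => /eqP->; rewrite mulr0.
Qed.

Lemma component_ker j x : j != ord_max ->
  (forall a, a != ord0 -> forall y, y \in E j -> gb a x y = 0) ->
  component E j x = 0.
Proof.
move=> jr gbx0; have [a a0 Ca] := coef_row_nonzero jr.
apply: (nondegE (component_mem _ _ _)) => y yEj.
have /eqP := gbx0 a a0 y yEj.
by rewrite (gb_memr _ _ yEj jr) mulf_eq0 (negbTE Ca) => /eqP.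
Qed.

Lemma orth_compl_W_summand j y : j != ord_max -> y \in E j -> orth_compl g W y.
Proof.
move=> jr yEj X WX; rewrite (form_componentl fullE bilin_g orthE _ yEj).
by rewrite (component_ker jr) ?form0l // => a a0 z _; apply: WX.
Qed.

Lemma mem_W_p : W p.
Proof. by move=> a a0 Y; rewrite gb_meml_last // null_p mul0r mulr0. Qed.

Lemma orth_compl_ker_last X :
  (forall a : 'I_k.+2, a != ord0 -> forall Y, orth_compl g W Y -> gb a X Y = 0)
  <-> X \in E ord_max.
Proof.
split=> [gbX0 | XEr a a0 Y WY].
- rewrite -(sum_component fullE X) (bigD1 ord_max) //= big1 ?addr0 ?component_mem //.
  move=> j jr; apply: (component_ker jr) => a a0 y yEj.
  exact/gbX0/(orth_compl_W_summand jr).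
- by rewrite gb_meml_last // (WY p mem_W_p) !mulr0.
Qed.

End DegenerateForms.

Theorem lemma3 (R : realType) (V : vectType R) (k : nat)
  (g : V -> V -> R) (E : 'I_k.+1 -> {vspace V}) (p : V)
  (gb : 'I_k.+2 -> V -> V -> R) (C : 'M[R]_k.+2) :
  lorentzian g ->
  directv (\sum_(j < k.+1) E j) ->
  (\sum_(j < k.+1) E j)%VS = fullv ->
  (forall i j : 'I_k.+1, i != j -> orth_subspaces g (E i) (E j)) ->
  (forall i, nondeg_on g (E i)) ->
  lorentzian_on g (E ord_max) ->
  p \in E ord_max -> p != 0 -> g p p = 0 ->
  gb ord0 = g ->
  (forall a, sym_bilinear_form (gb a)) ->
  forms_lin_indep gb ->
  (forall a X Y, gb a X Y =
      \sum_(b < k.+1) C (widen_ord (leqnSn _) b) a * partial_form g E b X Y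
      + C ord_max a * (g p X * g p Y)) ->
  (forall a : 'I_k.+2, a != ord0 -> C (inord k) a = 0) ->
  (forall a : 'I_k.+2, a != ord0 -> C ord_max a != 0) ->
  let W : V -> Prop := fun X => forall a : 'I_k.+2, a != ord0 -> form_ker (gb a) X in
  forall X : V,
    (forall a : 'I_k.+2, a != ord0 ->
       forall Y, orth_compl g W Y -> gb a X Y = 0)
    <-> X \in E ord_max.
Proof.
move=> [[bilin_g _] _] dirE fullE orthE nondegE _ pEr _ null_p _ _ indep gbE C_r _.
exact: (orth_compl_ker_last bilin_g dirE fullE orthE nondegE pEr null_p indep gbE C_r).
Qed.
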